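(* Let $f$ be an integer-valued function on the nonnegative integers such that $f(k)\ge 2 f(k-1) - 1$ for each $k\ge 1$ and $f(1)\ge 1$. If $M$ is a matroid with $\epsilon(M)\ge f(r(M))$ and $r(M)\ge 1$, then there is a round restriction $N$ of $M$ such that $\epsilon(N)\ge f(r(N))$ and $r(N)\ge 1$.
   Context: A matroid $M$ is round if $E(M)$ cannot be partitioned into two sets each of rank less than $r(M)$. A point is a rank-$1$ flat and $\epsilon(M)$ is the number of points of $M$. *)

From mathcomp Require Import all_boot all_order all_algebra.
Set Implicit Arguments. Unset Strict Implicit. Unset Printing Implicit Defensive.

Record matroid (T : finType) := Matroid {
  ground : {set T};
  indep : {set T} -> bool;
  indep_sub : forall I, indep I -> I \subset ground;
  indep0 : indep set0;
  indep_subset : forall I J : {set T}, J \subset I -> indep I -> indep J;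
  indep_aug : forall I J : {set T}, indep I -> indep J -> #|I| < #|J| ->
      exists2 e, e \in J :\: I & indep (e |: I)
}.

Section Matroid.
Variable T : finType.
Implicit Types (M : matroid T) (X A B F I J : {set T}).

Definition rk M A : nat := \max_(I : {set T} | (I \subset A) && indep M I) #|I|.

Definition mrank M : nat := rk M (ground M).

Definition flat M F : bool :=
  (F \subset ground M) &&
  [forall e in ground M :\: F, rk M F < rk M (e |: F)].

Definition point M F : bool := flat M F && (rk M F == 1).

Definition eps M : nat := #|[set F : {set T} | point M F]|.

Definition round M : Prop :=
  ~ exists A B, [/\ A :|: B = ground M, A :&: B = set0,
                   rk M A < mrank M & rk M B < mrank M].

Lemma restrict_sub M X I :
  indep M I && (I \subset X) -> I \subset X :&: ground M.
Proof. by case/andP=> /indep_sub hI hX; rewrite subsetI hX hI. Qed.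

Lemma restrict0 M X : indep M set0 && (set0 \subset X).
Proof. by rewrite indep0 sub0set. Qed.

Lemma restrict_subset M X I J : J \subset I ->
  indep M I && (I \subset X) -> indep M J && (J \subset X).
Proof.
move=> hJI /andP[hI hIX]; rewrite (indep_subset hJI hI) /=.
exact: subset_trans hJI hIX.
Qed.

Lemma restrict_aug M X I J : indep M I && (I \subset X) ->
  indep M J && (J \subset X) -> #|I| < #|J| ->
  exists2 e, e \in J :\: I & indep M (e |: I) && (e |: I \subset X).
Proof.
move=> /andP[hI hIX] /andP[hJ hJX] hlt.
have [e he hi] := indep_aug hI hJ hlt.
exists e => //; rewrite hi /= subUset hIX andbT sub1set.
by move: he; rewrite in_setD => /andP[_ /(subsetP hJX)].
Qed.

Definition restrict M X : matroid T :=
  @Matroid T (X :&: ground M) (fun I => indep M I && (I \subset X))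
    (@restrict_sub M X) (restrict0 M X) (@restrict_subset M X)
    (@restrict_aug M X).

End Matroid.

From mathcomp Require Import all_boot all_order all_algebra.
From mathcomp Require Import zify.
From Stdlib Require Import Classical.
Import Order.TTheory GRing.Theory Num.Theory.

(* Induct on r(M).  If M is not round, E(M) = A ∪ B with r(A), r(B) < r(M).
   Every point of M contains a non-loop of A or of B, so it meets A or B in a
   point of M|A or M|B; as two points sharing a non-loop coincide,
   ε(M) <= ε(M|A) + ε(M|B).  Since f is nondecreasing, if neither M|A nor M|B
   had ε >= f(r) at positive rank, each would have ε = 0 or
   ε <= f(r(M) - 1) - 1, and then ε(M) <= 2 f(r(M) - 1) - 2 < f(r(M)).  So one
   of them does, and the induction hypothesis applies to it. *)

Section RankAndPoints.
Set Implicit Arguments. Unset Strict Implicit.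
Variable T : finType.
Implicit Types (M : matroid T) (A B C I P Q X Y : {set T}).

Lemma indep_leq_rk M A I : I \subset A -> indep M I -> #|I| <= rk M A.
Proof.
move=> IA indI.
have := @leq_bigmax_cond _ (fun J : {set T} => (J \subset A) && indep M J) (fun J => #|J|) I.
by rewrite IA indI; apply.
Qed.

Lemma rk_basis M A : exists I, [/\ I \subset A, indep M I & #|I| = rk M A].
Proof.
have : 0 < #|[pred I : {set T} | (I \subset A) && indep M I]|.
  by apply/card_gt0P; exists set0; rewrite inE sub0set indep0.
case/(eq_bigmax_cond (fun I : {set T} => #|I|)) => I.
by rewrite inE => /andP[IA indI] rkI; exists I; split; rewrite // /rk rkI.
Qed.

Lemma subset_leq_rk M A B : A \subset B -> rk M A <= rk M B.
Proof.
move=> AB; have [I [IA indI <-]] := rk_basis M A.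
exact: indep_leq_rk (subset_trans IA AB) indI.
Qed.

Lemma rk_setIground M A : rk M (A :&: ground M) = rk M A.
Proof.
apply: eq_bigl => I; rewrite subsetI.
by case indI: (indep M I); rewrite ?andbF ?(indep_sub indI) ?andbT.
Qed.

Lemma rk_restrict M X Y : rk (restrict M X) Y = rk M (Y :&: X).
Proof. by apply: eq_bigl => I; rewrite subsetI -andbA (andbC (I \subset X)). Qed.

Lemma mrank_restrict M A : A \subset ground M -> mrank (restrict M A) = rk M A.
Proof. by move=> AE; rewrite /mrank rk_restrict /= setIAC setIid (setIidPl AE). Qed.

Lemma rk_gt0_nonloop M A : 0 < rk M A -> exists2 x, x \in A & indep M [set x].
Proof.
have [I [IA indI <-]] := rk_basis M A; case/card_gt0P => x xI.
by exists x; [exact: subsetP IA x xI | apply: indep_subset indI; rewrite sub1set].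
Qed.

Lemma point_subset_ground M P : point M P -> P \subset ground M.
Proof. by case/andP=> /andP[]. Qed.

Lemma point_rk M P : point M P -> rk M P = 1.
Proof. by case/andP=> _ /eqP. Qed.

Lemma mrank0_eps M : mrank M = 0 -> eps M = 0.
Proof.
move=> r0; apply/eqP; rewrite cards_eq0; apply/eqP/setP => P.
rewrite !inE; apply/negP => ptP.
by have := subset_leq_rk M (point_subset_ground ptP); rewrite point_rk // -/(mrank M) r0.
Qed.

(* r(e |: Q) = 2 as Q is a rank-1 flat, so augmenting {x} from a basis of
   e |: Q cannot use an element of Q. *)
Lemma point_indep2 M Q x e : point M Q -> x \in Q -> indep M [set x] ->
  e \in ground M -> e \notin Q -> indep M (e |: [set x]).
Proof.
case/andP=> /andP[_ /forallP flatQ] /eqP rkQ xQ indx eE eQ.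
have := flatQ e; rewrite in_setD eQ eE rkQ /= => rk_eQ.
have [I [IeQ indI cardI]] := rk_basis M (e |: Q).
have [|z] := indep_aug indx indI; first by rewrite cards1 cardI.
rewrite in_setD in_set1 => /andP[zx zI] indzx.
case/setU1P: (subsetP IeQ z zI) => [<- // | zQ].
have := indep_leq_rk (A := Q) _ indzx.
by rewrite rkQ cards2 zx subUset !sub1set zQ xQ => /(_ isT).
Qed.

Lemma point_nonloop_subset M P Q x : point M P -> point M Q ->
  x \in P -> x \in Q -> indep M [set x] -> P \subset Q.
Proof.
move=> ptP ptQ xP xQ indx; apply/subsetP => e eP; apply/negPn/negP => eQ.
have ex : e != x by apply: contraNneq eQ => ->.
have index := point_indep2 ptQ xQ indx (subsetP (point_subset_ground ptP) e eP) eQ.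
have := indep_leq_rk (A := P) _ index.
by rewrite point_rk // cards2 ex subUset !sub1set eP xP => /(_ isT).
Qed.

Lemma point_restrict M A P : point M P -> 0 < rk M (P :&: A) ->
  point (restrict M A) (P :&: A).
Proof.
move=> ptP rkPA.
have rkPA1 : rk M (P :&: A) = 1.
  by apply/eqP; rewrite eqn_leq rkPA andbT -(point_rk ptP) subset_leq_rk ?subsetIl.
have [x /setIP[xP xA] indx] := rk_gt0_nonloop rkPA.
rewrite /point /flat /= rk_restrict -setIA setIid rkPA1 eqxx andbT subsetI subsetIr.
rewrite (subset_trans (subsetIl P A) (point_subset_ground ptP)) /=.
apply/forallP => e; apply/implyP; rewrite !in_setD !in_setI => /andP[ePA /andP[eA eE]].
have eP : e \notin P by move: ePA; rewrite eA andbT.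
have ex : e != x by apply: contraNneq eP => ->.
rewrite rk_restrict; apply: leq_trans (indep_leq_rk _ (point_indep2 ptP xP indx eE eP)).
  by rewrite cards2 ex.
by rewrite subsetI !subUset !sub1set eA xA !inE xP xA eqxx !orbT.
Qed.

Lemma card_points_meeting_leq_eps M C :
  #|[set P | point M P & 0 < rk M (P :&: C)]| <= eps (restrict M C).
Proof.
rewrite -(card_in_imset (f := fun P => P :&: C)).
  apply: subset_leq_card; apply/subsetP => _ /imsetP[P + ->].
  by rewrite !inE => /andP[ptP rkPC]; exact: point_restrict.
move=> P Q; rewrite !inE => /andP[ptP rkPC] /andP[ptQ _] PCQC.
have [x xPC indx] := rk_gt0_nonloop rkPC.
have xQC : x \in Q :&: C by rewrite -PCQC.
move: xPC xQC => /setIP[xP _] /setIP[xQ _].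
by apply/eqP; rewrite eqEsubset !(point_nonloop_subset _ _ _ _ indx).
Qed.

Lemma eps_leq_restrictU M A B : A :|: B = ground M ->
  eps M <= eps (restrict M A) + eps (restrict M B).
Proof.
move=> ABE; apply: leq_trans (leq_add (card_points_meeting_leq_eps M A)
                                      (card_points_meeting_leq_eps M B)).
apply: leq_trans (leq_card_setU _ _); apply: subset_leq_card.
apply/subsetP => P; rewrite inE => ptP.
have [x xP indx] : exists2 x, x \in P & indep M [set x].
  by apply: rk_gt0_nonloop; rewrite point_rk.
have rk_trace C : x \in C -> 0 < rk M (P :&: C).
  by move=> xC; apply: leq_trans (indep_leq_rk _ indx); rewrite ?cards1 // sub1set inE xP.
have : x \in A :|: B by rewrite ABE (subsetP (point_subset_ground ptP)).
by rewrite !inE ptP => /orP[/rk_trace -> | /rk_trace ->]; rewrite ?orbT.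
Qed.

End RankAndPoints.

Section RankEquivalence.
Set Implicit Arguments. Unset Strict Implicit.
Variable T : finType.
Implicit Types (M N : matroid T) (A X : {set T}).

(* Restrictions of restrictions are not convertible to restrictions, but all
   notions involved here depend only on the ground set and the rank function. *)
Definition rk_equiv N M := ground N = ground M /\ rk N =1 rk M.

Lemma rk_equiv_sym N M : rk_equiv N M -> rk_equiv M N.
Proof. by case=> gNM rkNM; split=> // A; rewrite rkNM. Qed.

Lemma restrict_ground_equiv M : rk_equiv (restrict M (ground M)) M.
Proof. by split=> [|A]; rewrite /= ?setIid ?rk_restrict ?rk_setIground. Qed.

Lemma restrict_restrict_equiv M A X : X \subset A ->
  rk_equiv (restrict (restrict M A) X) (restrict M X).
Proof.
move=> XA; split=> [|Y]; first by rewrite /= setIA (setIidPl XA).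
by rewrite !rk_restrict -setIA (setIidPl XA).
Qed.

Section Invariance.
Variables N M : matroid T.
Hypothesis NM : rk_equiv N M.

Lemma mrank_equiv : mrank N = mrank M.
Proof. by case: NM => gNM rkNM; rewrite /mrank gNM rkNM. Qed.

Lemma eps_equiv : eps N = eps M.
Proof.
case: NM => gNM rkNM; apply: eq_card => F; rewrite !inE /point /flat gNM !rkNM.
by congr (_ && _ && _); apply: eq_forallb => e; rewrite !rkNM.
Qed.

Lemma round_equiv : round M -> round N.
Proof.
case: NM => gNM rkNM roundM [A [B [ABE AB0 rkA rkB]]]; apply: roundM.
by exists A, B; rewrite -gNM -mrank_equiv -!rkNM.
Qed.

End Invariance.
End RankEquivalence.

Local Open Scope ring_scope.

Section DenseRestriction.
Set Implicit Arguments. Unset Strict Implicit.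
Variables (T : finType) (f : nat -> int).
Implicit Types (M N : matroid T) (A B C X : {set T}).

Definition dense N : bool := (f (mrank N) <= (eps N)%:Z) && (0 < mrank N)%N.

Lemma dense_equiv N M : rk_equiv N M -> dense N = dense M.
Proof. by move=> NM; rewrite /dense (mrank_equiv NM) (eps_equiv NM). Qed.

Hypothesis f_rec : forall k, (1 <= k)%N -> 2 * f k.-1 - 1 <= f k.
Hypothesis f1 : 1 <= f 1%N.

Lemma f_ge1 k : (0 < k)%N -> 1 <= f k.
Proof.
elim: k => [//|[|k] IH _]; first exact: f1.
by have := f_rec (ltn0Sn k.+1); have := IH isT; rewrite /=; lia.
Qed.

Lemma f_homo : {homo f : m n / (m <= n)%N >-> m <= n}.
Proof.
apply: homo_leq => [x|y x z|k]; [exact: lexx | exact: le_trans |].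
by have := f_rec (ltn0Sn k); have := f_ge1 (ltn0Sn k); rewrite /=; lia.
Qed.

Lemma eps_not_dense N C : C \subset ground N -> (rk N C < mrank N)%N ->
  ~~ dense (restrict N C) ->
  eps (restrict N C) = 0%N \/ (eps (restrict N C))%:Z <= f (mrank N).-1 - 1.
Proof.
rewrite /dense => CE rkC; rewrite mrank_restrict //.
have [rkC0|rkC_gt0] := posnP (rk N C).
  by left; apply: mrank0_eps; rewrite mrank_restrict.
rewrite andbT => not_dense; right.
have : f (rk N C) <= f (mrank N).-1.
  by apply: f_homo; rewrite -ltnS (ltn_predK rkC).
lia.
Qed.

Lemma dense_restrictU N A B : dense N -> A :|: B = ground N ->
  (rk N A < mrank N)%N -> (rk N B < mrank N)%N ->
  dense (restrict N A) || dense (restrict N B).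
Proof.
case/andP=> denseN r_gt0 ABE rkA rkB; apply/negPn/negP; rewrite negb_or.
case/andP=> /(eps_not_dense _ rkA) epsA /(eps_not_dense _ rkB) epsB.
have AE : A \subset ground N by rewrite -ABE subsetUl.
have BE : B \subset ground N by rewrite -ABE subsetUr.
have := eps_leq_restrictU ABE; have := f_rec r_gt0; have := f_ge1 r_gt0.
move: denseN (epsA AE) (epsB BE).
lia.
Qed.

Lemma exists_round_dense_restriction N : dense N ->
  exists X, [/\ X \subset ground N, round (restrict N X) & dense (restrict N X)].
Proof.
have [n] := ubnP (mrank N); elim: n N => // n IH N; rewrite ltnS => rN denseN.
have descend C : C \subset ground N -> (rk N C < mrank N)%N -> dense (restrict N C) ->
    exists X, [/\ X \subset ground N, round (restrict N X) & dense (restrict N X)].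
  move=> CE rkC /IH[|X [/subsetIP[XC _] roundX denseX]].
    by rewrite mrank_restrict // (leq_trans rkC rN).
  have XCX := restrict_restrict_equiv N XC.
  exists X; split; first exact: subset_trans XC CE.
    exact: round_equiv (rk_equiv_sym XCX) roundX.
  by rewrite -(dense_equiv XCX).
case: (classic (round N)) => [roundN | /NNPP[A [B [ABE _ rkA rkB]]]].
  have NEN := restrict_ground_equiv N.
  exists (ground N); rewrite (dense_equiv NEN); split=> //.
  exact: round_equiv NEN roundN.
have AE : A \subset ground N by rewrite -ABE subsetUl.
have BE : B \subset ground N by rewrite -ABE subsetUr.
by case/orP: (dense_restrictU denseN ABE rkA rkB); [apply: descend AE rkA | apply: descend BE rkB].
Qed.

End DenseRestriction.

Theorem lemma2p4 (f : nat -> int)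
  (hf : forall k : nat, (1 <= k)%N -> 2 * f k.-1 - 1 <= f k)
  (hf1 : 1 <= f 1%N)
  (T : finType) (M : matroid T)
  (hM : f (mrank M) <= (eps M)%:Z) (hr : (1 <= mrank M)%N) :
  exists X : {set T}, [/\ X \subset ground M,
    round (restrict M X),
    f (mrank (restrict M X)) <= (eps (restrict M X))%:Z &
    (1 <= mrank (restrict M X))%N].
Proof.
have [|X [XE roundX /andP[denseX rX]]] := exists_round_dense_restriction hf hf1 (N := M).
  by rewrite /dense hM hr.
by exists X.
Qed.
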